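(* Let $0<w_1<\dots<w_n$ be integers with $\sum_{i=1}^n w_i<2^n-1$, and let $\Delta$ satisfy $2^{n/2}\le\Delta\le d<2^n$. Then there exists $j\in\{0,1,\dots,n-1\}$ such that $\#\{t: f_t>2^j\}>\frac{\Delta}{2^{j+1}n}$.
   Context: Let $w(S)=\sum_{i\in S}w_i$. The frequency is $f_t=\#\{S\subseteq\{1,\dots,n\}:w(S)=t\}$ for integers $t\ge0$. The parameter is $d=\sum_{0\le t<2^n}\max\{0,f_t-1\}$. *)

From mathcomp Require Import all_boot all_order all_algebra.
Set Implicit Arguments. Unset Strict Implicit. Unset Printing Implicit Defensive.

Definition wsum (n : nat) (w : 'I_n -> nat) (S : {set 'I_n}) : nat :=
  \sum_(i in S) w i.

Definition freq (n : nat) (w : 'I_n -> nat) (t : nat) : nat :=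
  #|[set S : {set 'I_n} | wsum w S == t]|.

(* d = sum_{0 <= t < 2^n} max{0, f_t - 1}  (truncated subtraction = max(0,.)) *)
Definition dpar (n : nat) (w : 'I_n -> nat) : nat :=
  \sum_(0 <= t < 2 ^ n) (freq w t - 1).

(* #{t : f_t > k}; since f_t > 0 forces t <= sum w < 2^n under the
   hypotheses, it suffices to range over t < 2^n *)
Definition nbig (n : nat) (w : 'I_n -> nat) (k : nat) : nat :=
  #|[set t : 'I_(2 ^ n) | k < freq w t]|.

From mathcomp Require Import all_boot all_order all_algebra.
From mathcomp Require Import zify ring lra.
Import Order.TTheory GRing.Theory Num.Theory.
Local Open Scope ring_scope.

(* Dyadic layer-cake counting: a frequency f <= 2^n satisfies
   f - 1 <= sum of the 2^j (j < n) with 2^j < f, so summing over t gives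
   d <= sum_j 2^j #{t : f_t > 2^j}.  If every term of the right-hand side were
   at most Delta / (2n), then d <= Delta / 2 < Delta <= d. *)

Lemma freq_le_exp2 (n : nat) (w : 'I_n -> nat) (t : nat) : (freq w t <= 2 ^ n)%N.
Proof.
apply: leq_trans (max_card _) _.
by rewrite -cardsT -powersetT card_powerset cardsT card_ord.
Qed.

Lemma sum_ord_exp2 (m : nat) : ((\sum_(j < m) 2 ^ j).+1 = 2 ^ m)%N.
Proof.
elim: m => [|m IHm]; first by rewrite big_ord0.
by rewrite big_ord_recr /= -addSn IHm expnS mul2n addnn.
Qed.

Lemma subn1_le_sum_exp2_lt (m f : nat) :
  (f <= 2 ^ m)%N -> (f - 1 <= \sum_(j < m | 2 ^ j < f) 2 ^ j)%N.
Proof.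
elim: m f => [|m IHm] f; first by rewrite big_ord0 expn0; case: f => [|[]].
move=> le_f_2m1; rewrite big_mkcond big_ord_recr /= -big_mkcond /=.
have [le_f_2m | lt_2m_f] := leqP f (2 ^ m).
  exact: leq_trans (IHm _ le_f_2m) (leq_addr _ _).
have -> : (\sum_(j < m | 2 ^ j < f) 2 ^ j = \sum_(j < m) 2 ^ j)%N.
  by apply: eq_bigl => j; apply: leq_ltn_trans lt_2m_f; rewrite leq_exp2l // ltnW.
have := sum_ord_exp2 m; move: le_f_2m1; rewrite expnS; lia.
Qed.

Lemma dpar_le_sum_nbig (n : nat) (w : 'I_n -> nat) :
  (dpar w <= \sum_(j < n) 2 ^ j * nbig w (2 ^ j))%N.
Proof.
have nbigE j : (2 ^ j * nbig w (2 ^ j)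
    = \sum_(t : 'I_(2 ^ n)) if 2 ^ j < freq w t then 2 ^ j else 0)%N.
  by rewrite /nbig -big_mkcond sum_nat_cond_const mulnC.
rewrite (eq_bigr _ (fun (j : 'I_n) _ => nbigE j)) exchange_big /= /dpar big_mkord.
apply: leq_sum => t _; rewrite -big_mkcond.
exact/subn1_le_sum_exp2_lt/freq_le_exp2.
Qed.

Lemma exists_ltr_of_sum (R : realDomainType) (n : nat) (F G : 'I_n -> R) :
  \sum_(i < n) F i < \sum_(i < n) G i -> exists i, F i < G i.
Proof.
move=> lt_sum; apply/existsP; move: lt_sum.
apply: contraTT => /existsPn no_lt; rewrite -leNgt.
by apply: ler_sum => i _; rewrite leNgt no_lt.
Qed.

Theorem lemma3p5 (R : rcfType) (n : nat) (w : 'I_n -> nat) (Delta : R) :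
  (forall i, 0 < w i)%N ->
  (forall i j : 'I_n, (i < j)%N -> (w i < w j)%N) ->
  (\sum_(i < n) w i < 2 ^ n - 1)%N ->
  Num.sqrt (2 ^+ n) <= Delta ->
  Delta <= (dpar w)%:R ->
  (dpar w < 2 ^ n)%N ->
  exists j : 'I_n,
    Delta / (2 ^+ j.+1 * n%:R) < (nbig w (2 ^ j))%:R.
Proof.
move=> _ _ sum_w_lt sqrt_le_Delta Delta_le_d _.
have n_gt0 : (0 < n)%N by move: (leq_ltn_trans (leq0n _) sum_w_lt); case: (n).
have Delta_gt0 : 0 < Delta.
  by apply: lt_le_trans sqrt_le_Delta; rewrite sqrtr_gt0 exprn_gt0.
have n_neq0 : n%:R != 0 :> R by rewrite pnatr_eq0 -lt0n.
have [j lt_j] : exists j : 'I_n,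
    Delta / (2 * n%:R) < ((2 ^ j * nbig w (2 ^ j))%N)%:R.
  apply: exists_ltr_of_sum; rewrite -natr_sum sumr_const card_ord.
  apply: lt_le_trans (le_trans Delta_le_d _); last by rewrite ler_nat dpar_le_sum_nbig.
  have -> : Delta / (2 * n%:R) *+ n = Delta / 2 by rewrite -mulr_natr; field.
  lra.
exists j.
have -> : Delta / (2 ^+ j.+1 * n%:R) = Delta / (2 * n%:R) / 2 ^+ j.
  by rewrite exprS; field; rewrite n_neq0 andbT expf_neq0 // pnatr_eq0.
by move: lt_j; rewrite natrM natrX (mulrC (2 ^+ j)) -ltr_pdivrMr ?exprn_gt0.
Qed.
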